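(* Let $m<n$ and let $\mathbf{A}\in\mathbb{R}^{m\times n}$ have rank $m$, partitioned as $\mathbf{A} = [\mathbf{X}\,|\,\mathbf{Y}]$ with $\mathbf{X}\in\mathbb{R}^{m\times m}$ invertible (the first $m$ columns form a full-rank square matrix) and $\mathbf{Y}\in\mathbb{R}^{m\times(n-m)}$. Let $\mathbf{A} = \mathbf{Q}\mathbf{R}$ be its QR decomposition with $\mathbf{Q}\in\mathbb{R}^{m\times m}$ orthogonal and $\mathbf{R}\in\mathbb{R}^{m\times n}$ upper triangular, partitioned as $\mathbf{R} = [\mathbf{U}\,|\,\mathbf{V}]$ with $\mathbf{U}\in\mathbb{R}^{m\times m}$ (upper triangular, invertible, $\mathbf{X}=\mathbf{Q}\mathbf{U}$) and $\mathbf{V}\in\mathbb{R}^{m\times(n-m)}$ ($\mathbf{Y}=\mathbf{Q}\mathbf{V}$). Suppose $\mathbf{A}'\mapsto(\mathbf{Q}(\mathbf{A}'),\mathbf{R}(\mathbf{A}'))$ is a differentiable map on a neighborhood of $\mathbf{A}$ giving such a decomposition for each $\mathbf{A}'$ (e.g. normalized so $\mathbf{R}$ has positive diagonal). Let $\bar{\mathbf{Q}}\in\mathbb{R}^{m\times m}$ and $\bar{\mathbf{R}} = [\bar{\mathbf{U}}\,|\,\bar{\mathbf{V}}]\in\mathbb{R}^{m\times n}$ be arbitrary upstream gradients, with $\bar{\mathbf{U}}\in\mathbb{R}^{m\times m}$, $\bar{\mathbf{V}}\in\mathbb{R}^{m\times(n-m)}$. Then the reverse-mode gradient is $\bar{\mathbf{A}}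 = [\bar{\mathbf{X}}\,|\,\bar{\mathbf{Y}}]$ with $$\bar{\mathbf{X}} = \left[\bar{\mathbf{Q}}_{prime} + \mathbf{Q}\,\mathrm{copyltu}(\mathbf{M})\right]\mathbf{U}^{-T},\qquad \bar{\mathbf{Y}} = \mathbf{Q}\bar{\mathbf{V}},$$ where $\bar{\mathbf{Q}}_{prime} = \bar{\mathbf{Q}} + \mathbf{Y}\bar{\mathbf{V}}^T$ and $\mathbf{M} = \mathbf{U}\bar{\mathbf{U}}^T - \bar{\mathbf{Q}}_{prime}^T\mathbf{Q}$.
   Context: Reverse-mode gradient: given a differentiable map $\mathbf{A}\mapsto(\mathbf{Q}(\mathbf{A}),\mathbf{R}(\mathbf{A}))$ and upstream matrices $\bar{\mathbf{Q}},\bar{\mathbf{R}}$ of the same shapes as $\mathbf{Q},\mathbf{R}$, the gradient $\bar{\mathbf{A}}$ is the unique matrix of the shape of $\mathbf{A}$ such that $\mathrm{Tr}(\bar{\mathbf{A}}^T d\mathbf{A}) = \mathrm{Tr}(\bar{\mathbf{Q}}^T d\mathbf{Q}) + \mathrm{Tr}(\bar{\mathbf{R}}^T d\mathbf{R})$ for every direction $d\mathbf{A}$, where $d\mathbf{Q}, d\mathbf{R}$ are the directional derivatives of $\mathbf{Q},\mathbf{R}$ at $\mathbf{A}$ in direction $d\mathbf{A}$. For a square matrix $\mathbf{M}$, $\mathrm{copyltu}(\mathbf{M})$ is the symmetric matrix with entries $\mathrm{copyltu}(\mathbf{M})_{ij} = \mathbf{M}_{\max(i,j),\min(i,j)}$;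 equivalently $\mathrm{copyltu}(\mathbf{M}) = \mathrm{sym}(\mathbf{M}\circ\mathbf{E})$, where $\mathrm{sym}(\mathbf{B}) = (\mathbf{B}+\mathbf{B}^T)/2$, $\circ$ is the Hadamard product and $\mathbf{E}$ has $e_{ij}=0$ if $i<j$, $1$ if $i=j$, $2$ if $i>j$. $\mathbf{U}^{-T} = (\mathbf{U}^{-1})^T$. *)

From HB Require Import structures.
From mathcomp Require Import all_boot all_order all_algebra.
From mathcomp Require Import all_classical all_reals all_analysis.
Set Implicit Arguments. Unset Strict Implicit. Unset Printing Implicit Defensive.
Import Order.TTheory GRing.Theory Num.Theory.
Local Open Scope ring_scope.

Definition copyltu (R : Type) (m : nat) (M : 'M[R]_m) : 'M[R]_m :=
  \matrix_(i, j) if (j <= i)%N then M i j else M j i.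

Definition upper_trig (R : pzRingType) (m n : nat) (A : 'M[R]_(m, n)) : Prop :=
  forall (i : 'I_m) (j : 'I_n), (j < i)%N -> A i j = 0.

Definition orthogonal_mx (R : pzRingType) (m : nat) (Q : 'M[R]_m) : Prop :=
  Q^T *m Q = 1%:M.

From HB Require Import structures.
From mathcomp Require Import all_boot all_order all_algebra.
From mathcomp Require Import all_classical all_reals all_analysis.
From mathcomp Require Import ring.
Set Implicit Arguments. Unset Strict Implicit. Unset Printing Implicit Defensive.
Import Order.TTheory GRing.Theory Num.Theory numFieldNormedType.Exports.
Local Open Scope ring_scope.

(* Write Q, R = [U | V] for the factors at A and dQ, dR = [dU | dV] for their
   differentials in a direction dA.  Differentiating the three identities that
   hold near A gives the constraints
     dA = dQ R + Q dR,   dQ^T Q + Q^T dQ = 0,   dR upper triangular.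
   Hence C := Q^T dQ is skew-symmetric and D := dU U^-1 is upper triangular,
   and dA = [Q (C + D) U | Q (C V + dV)].  In these coordinates the claimed
   identity  tr(Abar^T dA) = tr(Qbar^T dQ) + tr(Rbar^T dR)  is pure trace
   algebra: tr(S C) = 0 for S symmetric (used with S = copyltu M), and
   tr((copyltu M - M) D) = 0 for D upper triangular. *)

Section EntrywiseCalculus.
Variables (R : realFieldType) (W : normedModType R).

Lemma is_derive_entry p q (F : W -> 'M[R]_(p, q)) a v i j :
  differentiable F a -> is_derive a v (fun x => F x i j) ('d F a v i j).
Proof.
move=> dF; have dFv : derivable F a v := diff_derivable dF.
apply: DeriveDef; first exact: (derivable_mxP _ _ _).1 dFv i j.
by rewrite -deriveE // derive_mx // mxE.
Qed.

Lemma is_derive_tr_entry p q (F : W -> 'M[R]_(p, q)) a v i j :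
  differentiable F a -> is_derive a v (fun x => (F x)^T i j) (('d F a v)^T i j).
Proof.
have -> : (fun x => (F x)^T i j) = fun x => F x j i by apply/funext => x; rewrite mxE.
by rewrite mxE; exact: is_derive_entry.
Qed.

Lemma is_derive_mulmx p q r (F : W -> 'M[R]_(p, q)) (G : W -> 'M[R]_(q, r))
    (dF : 'M[R]_(p, q)) (dG : 'M[R]_(q, r)) a v :
  (forall i j, is_derive a v (fun x => F x i j) (dF i j)) ->
  (forall i j, is_derive a v (fun x => G x i j) (dG i j)) ->
  forall i j, is_derive a v (fun x => (F x *m G x) i j)
                            ((dF *m G a + F a *m dG) i j).
Proof.
move=> hF hG i j.
have -> : (fun x => (F x *m G x) i j) =
          \sum_(l < q) ((fun x => F x i l) * (fun x => G x l j)).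
  by apply/funext => x; rewrite mxE fct_sumE.
rewrite !mxE -big_split /=.
apply: is_derive_sum => l.
by rewrite addrC [dF i l * _]mulrC; apply: is_deriveM.
Qed.

Lemma is_derive_near_eq (f g : W -> R) (df dg : R) a v :
  (\forall x \near a, f x = g x) ->
  is_derive a v f df -> is_derive a v g dg -> df = dg.
Proof.
move=> fg hf hg; have hg' : is_derive a v f dg.
  by apply: near_eq_is_derive hg; apply: filterS fg.
by rewrite -(@derive_val _ _ _ _ _ _ _ hf) (@derive_val _ _ _ _ _ _ _ hg').
Qed.

Lemma mulmx_constraint_derive p q r (F : W -> 'M[R]_(p, q))
    (G : W -> 'M[R]_(q, r)) (H : W -> 'M[R]_(p, r))
    (dF : 'M[R]_(p, q)) (dG : 'M[R]_(q, r)) (dH : 'M[R]_(p, r)) a v :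
  (\forall x \near a, F x *m G x = H x) ->
  (forall i j, is_derive a v (fun x => F x i j) (dF i j)) ->
  (forall i j, is_derive a v (fun x => G x i j) (dG i j)) ->
  (forall i j, is_derive a v (fun x => H x i j) (dH i j)) ->
  dF *m G a + F a *m dG = dH.
Proof.
move=> FGH hF hG hH; apply/matrixP => i j.
apply: is_derive_near_eq (is_derive_mulmx hF hG i j) (hH i j).
by apply: filterS FGH => x ->.
Qed.

(* Entries that vanish identically near a have zero derivative, so the
   differential of a map into upper triangular matrices is upper triangular. *)
Lemma upper_trig_diff m n (F : W -> 'M[R]_(m, n)) a v :
  (\forall x \near a, upper_trig (F x)) -> differentiable F a ->
  upper_trig ('d F a v).
Proof.
move=> trigF dF i j ji.
apply: is_derive_near_eq (is_derive_entry v i j dF) (is_derive_cst 0 a v).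
by apply: filterS trigF => x /(_ i j ji).
Qed.

End EntrywiseCalculus.

Lemma is_derive_coord (R : realFieldType) p q (a v : 'M[R]_(p, q)) i j :
  is_derive a v (fun x => x i j) (v i j).
Proof.
have [diff_id d_id] : is_diff a id id := is_diff_id a.
by have := is_derive_entry v i j diff_id; rewrite d_id.
Qed.

Lemma upper_trig_mulmx (R : pzRingType) m n p (A : 'M[R]_(m, n)) (B : 'M[R]_(n, p)) :
  upper_trig A -> upper_trig B -> upper_trig (A *m B).
Proof.
move=> trigA trigB i j ji; rewrite mxE big1 // => l _.
have [li | il] := ltnP l i; first by rewrite trigA // mul0r.
by rewrite trigB ?mulr0 // (leq_trans ji il).
Qed.

Lemma upper_trig_lsubmx (R : pzRingType) m n1 n2 (A : 'M[R]_(m, n1 + n2)) :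
  upper_trig A -> upper_trig (lsubmx A).
Proof. by move=> trigA i j ji; rewrite mxE trigA. Qed.

(* The inverse of an invertible upper triangular matrix is upper triangular:
   solve (invmx U) U = 1 column by column, from left to right. *)
Lemma upper_trig_invmx (R : fieldType) n (U : 'M[R]_n) :
  upper_trig U -> U \in unitmx -> upper_trig (invmx U).
Proof.
move=> trigU unitU.
have diagU j : U j j != 0.
  have trigUT : is_trig_mx U^T.
    by apply/is_trig_mxP => i l il; rewrite mxE trigU.
  move: unitU; rewrite unitmxE -det_tr det_trig // unitfE (bigD1 j) //=.
  by rewrite mulf_eq0 negb_or mxE => /andP[].
set W := invmx U; have WU : W *m U = 1%:M by rewrite mulVmx.
suff W0 c (i j : 'I_n) : j = c :> nat -> (j < i)%N -> W i j = 0.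
  by move=> i j; apply: W0.
elim/ltn_ind: c => c IH in i j *; move=> jc ji.
have /eqP : (W *m U) i j = 0.
  by rewrite WU mxE; case: eqP => // ij; rewrite ij ltnn in ji.
rewrite mxE (bigD1 j) //= big1 ?addr0 => [|l lj].
  by rewrite mulf_eq0 (negbTE (diagU j)) orbF => /eqP.
have [jl | lj'] := ltnP j l; first by rewrite trigU ?mulr0.
have lj_lt : (l < j)%N.
  by rewrite ltn_neqAle lj' andbT; apply: contra lj => /eqP/val_inj->.
by rewrite (IH l) ?mul0r // -?jc // (ltn_trans lj_lt ji).
Qed.

Lemma copyltu_tr (R : Type) n (M : 'M[R]_n) : (copyltu M)^T = copyltu M.
Proof.
by apply/matrixP => i j; rewrite !mxE; case: (ltngtP i j) => // /val_inj->.
Qed.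

(* copyltu M and M agree on and below the diagonal, so their difference
   is strictly upper triangular and is trace-orthogonal to upper
   triangular matrices. *)
Lemma mxtrace_copyltu_upper (R : pzRingType) n (M D : 'M[R]_n) :
  upper_trig D -> \tr ((copyltu M - M) *m D) = 0.
Proof.
move=> trigD; rewrite /mxtrace big1 // => i _; rewrite mxE big1 // => l _.
rewrite !mxE; have [li | il] := leqP l i; first by rewrite subrr mul0r.
by rewrite trigD ?mulr0.
Qed.

Lemma mxtrace_sym_skew (R : numDomainType) n (S C : 'M[R]_n) :
  S^T = S -> C^T = - C -> \tr (S *m C) = 0.
Proof.
move=> symS skewC.
have trN : \tr (S *m C) = - \tr (S *m C).
  by rewrite -{1}mxtrace_tr trmx_mul symS skewC mulNmx linearN /= mxtrace_mulC.
by apply/eqP; rewrite -[_ == 0](mulrn_eq0 _ 2) mulr2n {2}trN subrr.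
Qed.

Lemma mxtrace_row_mx (R : pzRingType) m n1 n2 (A1 : 'M[R]_(m, n1))
    (A2 : 'M[R]_(m, n2)) (B : 'M[R]_(m, n1 + n2)) :
  \tr ((row_mx A1 A2)^T *m B) = \tr (A1^T *m lsubmx B) + \tr (A2^T *m rsubmx B).
Proof. by rewrite -{1}(hsubmxK B) tr_row_mx mul_col_row mxtrace_block. Qed.

Section QRAdjoint.
Variables (R : numFieldType) (m k : nat).
Variables (Qbar Ubar : 'M[R]_m) (Vbar : 'M[R]_(m, k)).

Definition qr_grad_X (Q U : 'M[R]_m) (Y : 'M[R]_(m, k)) : 'M[R]_m :=
  let Qbar' := Qbar + Y *m Vbar^T in
  let M := U *m Ubar^T - Qbar'^T *m Q in
  (Qbar' + Q *m copyltu M) *m (invmx U)^T.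

(* The adjoint identity in the coordinates of the tangent space: the
   perturbation of Q is Q C with C skew, that of U is D U with D upper
   triangular, and that of V is dV. *)
Lemma qr_adjoint_coords (Q C D U : 'M[R]_m) (V dV : 'M[R]_(m, k)) :
  Q^T *m Q = 1%:M -> C^T = - C -> upper_trig D -> U \in unitmx ->
  \tr ((qr_grad_X Q U (Q *m V))^T *m (Q *m ((C + D) *m U)))
    + \tr ((Q *m Vbar)^T *m (Q *m (C *m V + dV)))
  = \tr (Qbar^T *m (Q *m C)) + \tr (Ubar^T *m (D *m U)) + \tr (Vbar^T *m dV).
Proof.
move=> orthQ skewC trigD unitU; rewrite /qr_grad_X.
set Qbar' := Qbar + _; set M := _ - _; set K := copyltu M.
set G := Qbar'^T *m Q.
have GE : G = Qbar^T *m Q + Vbar *m V^T.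
  by rewrite /G /Qbar' linearD /= mulmxDl !trmx_mul trmxK -!mulmxA orthQ mulmx1.
have UW : U *m invmx U = 1%:M by rewrite mulmxV.
have trX : \tr (((Qbar' + Q *m K) *m (invmx U)^T)^T *m (Q *m ((C + D) *m U)))
           = \tr (G *m C) + \tr (K *m C) + \tr ((G + K) *m D).
  rewrite trmx_mul trmxK linearD /= trmx_mul copyltu_tr -mulmxA mxtrace_mulC.
  have XQ : (Qbar'^T + K *m Q^T) *m Q = G + K.
    by rewrite mulmxDl -mulmxA orthQ mulmx1.
  rewrite -/K -!mulmxA UW mulmx1 !mulmxA XQ.
  by rewrite mulmxDr linearD [(G + K) *m C]mulmxDl linearD.
have trY : \tr ((Q *m Vbar)^T *m (Q *m (C *m V + dV)))
           = \tr (Vbar^T *m dV) - \tr (Vbar *m V^T *m C).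
  rewrite trmx_mul mulmxA -(mulmxA Vbar^T) orthQ mulmx1 mulmxDr linearD /= addrC.
  congr (_ + _); rewrite mxtrace_mulC -mxtrace_tr !trmx_mul trmxK skewC.
  by rewrite !mulmxN linearN mulmxA.
have trQ : \tr (Qbar^T *m (Q *m C)) = \tr (G *m C) - \tr (Vbar *m V^T *m C).
  by rewrite GE mulmxDl linearD /= mulmxA addrK.
have trU : \tr (Ubar^T *m (D *m U)) = \tr (U *m Ubar^T *m D).
  by rewrite mulmxA mxtrace_mulC mulmxA.
have trK : \tr (K *m C) = 0 by apply: mxtrace_sym_skew; rewrite ?copyltu_tr.
have trD : \tr ((G + K) *m D) = \tr (U *m Ubar^T *m D).
  apply/eqP; rewrite -subr_eq0 -linearB /= -mulmxBl.
  by rewrite -(mxtrace_copyltu_upper M trigD) /M -/G opprB addrA (addrC K).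
by rewrite trX trY trQ trU trK trD addr0; ring.
Qed.

Lemma qr_adjoint_identity (Q dQ : 'M[R]_m) (Rm dR A dA : 'M[R]_(m, m + k)) :
  Q^T *m Q = 1%:M -> Q *m Rm = A -> dQ *m Rm + Q *m dR = dA ->
  dQ^T *m Q + Q^T *m dQ = 0 -> upper_trig Rm -> upper_trig dR ->
  lsubmx Rm \in unitmx ->
  \tr ((row_mx (qr_grad_X Q (lsubmx Rm) (rsubmx A)) (Q *m Vbar))^T *m dA)
  = \tr (Qbar^T *m dQ) + \tr ((row_mx Ubar Vbar)^T *m dR).
Proof.
move=> orthQ QRA dQRA dorthQ trigR trigdR unitU.
set U := lsubmx Rm; set V := rsubmx Rm; set dU := lsubmx dR; set dV := rsubmx dR.
have QQT : Q *m Q^T = 1%:M by apply: mulmx1C.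
set C := Q^T *m dQ; have dQE : dQ = Q *m C by rewrite mulmxA QQT mul1mx.
have skewC : C^T = - C.
  by rewrite /C trmx_mul trmxK; apply/eqP; rewrite -addr_eq0 dorthQ.
set D := dU *m invmx U.
have trigD : upper_trig D.
  apply: upper_trig_mulmx; first exact: upper_trig_lsubmx.
  by apply: upper_trig_invmx unitU; apply: upper_trig_lsubmx.
have dUE : dU = D *m U by rewrite -mulmxA mulVmx // mulmx1.
have dXE : lsubmx dA = Q *m ((C + D) *m U).
  rewrite -dQRA linearD /= -!mulmx_lsub -/U -/dU dUE dQE.
  by rewrite -mulmxA -mulmxDr mulmxDl.
have dYE : rsubmx dA = Q *m (C *m V + dV).
  by rewrite -dQRA linearD /= -!mulmx_rsub -/V -/dV dQE -mulmxA -mulmxDr.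
have YE : rsubmx A = Q *m V by rewrite -QRA mulmx_rsub.
rewrite !mxtrace_row_mx dXE dYE YE -/dU -/dV dUE dQE addrA.
exact: qr_adjoint_coords.
Qed.

End QRAdjoint.

Unset Implicit Arguments.

Theorem proposition2 (R : realType) (m k : nat) (hk : (0 < k)%N)
  (A : 'M[R]_(m, m + k))
  (Qf : 'M[R]_(m, m + k) -> 'M[R]_m) (Rf : 'M[R]_(m, m + k) -> 'M[R]_(m, m + k))
  (hrank : \rank A = m)
  (hX : lsubmx A \in unitmx)
  (hQR : \forall A' \near A,
      [/\ Qf A' *m Rf A' = A', orthogonal_mx (Qf A') & upper_trig (Rf A')])
  (hdQ : \forall A' \near A, differentiable Qf A')
  (hdR : \forall A' \near A, differentiable Rf A')
  (Qbar : 'M[R]_m) (Ubar : 'M[R]_m) (Vbar : 'M[R]_(m, k)) :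
  let Q := Qf A in
  let U := lsubmx (Rf A) in
  let Y := rsubmx A in
  let Rbar := row_mx Ubar Vbar in
  let Qbar' := Qbar + Y *m Vbar^T in
  let M := U *m Ubar^T - Qbar'^T *m Q in
  let Xbar := (Qbar' + Q *m copyltu M) *m (invmx U)^T in
  let Ybar := Q *m Vbar in
  let Abar := row_mx Xbar Ybar in
  forall dA : 'M[R]_(m, m + k),
    \tr (Abar^T *m dA) = \tr (Qbar^T *m 'd Qf A dA) + \tr (Rbar^T *m 'd Rf A dA).
Proof.
move=> Q U Y Rbar Qbar' M Xbar Ybar Abar dA.
have diffQ : differentiable Qf A := nbhs_singleton hdQ.
have diffR : differentiable Rf A := nbhs_singleton hdR.
have [QRA orthQ trigR] := nbhs_singleton hQR.
have dQ_entry := fun i j => is_derive_entry dA i j diffQ.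
have dR_entry := fun i j => is_derive_entry dA i j diffR.
have dQRA : 'd Qf A dA *m Rf A + Qf A *m 'd Rf A dA = dA.
  apply: (mulmx_constraint_derive (H := id)) dQ_entry dR_entry (is_derive_coord A dA).
  by apply: filterS hQR => x [].
have dorthQ : ('d Qf A dA)^T *m Qf A + (Qf A)^T *m 'd Qf A dA = 0.
  apply: (mulmx_constraint_derive (F := fun x => (Qf x)^T) (G := Qf)
           (H := fun _ => 1%:M)) _ _ dQ_entry _.
  - by apply: filterS hQR => x [].
  - by move=> i j; exact: is_derive_tr_entry.
  - by move=> i j; rewrite !mxE; exact: is_derive_cst.
have trigdR : upper_trig ('d Rf A dA).
  by apply: upper_trig_diff => //; apply: filterS hQR => x [].
have unitU : U \in unitmx.
  by move: hX; rewrite -QRA -mulmx_lsub unitmx_mul => /andP[].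
exact: qr_adjoint_identity orthQ QRA dQRA dorthQ trigR trigdR unitU.
Qed.
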